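(* Let $\mathcal{G},\mathcal{H}$ be hypergraphs on a common vertex set with $r=\mathrm{rank}(\mathcal{H})$. Then $\mathcal{G}=\mathrm{Tr}(\mathcal{H})$ if and only if all three of the following hold: (1) $\mathcal{G}\subseteq\mathrm{Tr}(\mathcal{H})$; (2) $\mathrm{Tr}(\mathcal{G})|_r\subseteq\mathcal{H}$; (3) $\mathrm{rank}(\mathrm{Tr}(\mathcal{G}))\le r$.
   Context: $\mathrm{rank}(\mathcal{H})$ is the maximum edge size. $\mathrm{Tr}(\mathcal{H})$ is the set of inclusion-wise minimal hitting sets of $\mathcal{H}$ (sets meeting every edge, minimal under inclusion). $\mathrm{Tr}(\mathcal{G})|_r$ is the set of minimal hitting sets of $\mathcal{G}$ with at most $r$ vertices. Hypergraphs need not be Sperner (an edge may contain another). *)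

From mathcomp Require Import all_boot.
Set Implicit Arguments. Unset Strict Implicit. Unset Printing Implicit Defensive.

(* A hypergraph on the finite vertex set T is a set of edges {set {set T}};
   it need not be Sperner. *)
Definition hypergraph (T : finType) := {set {set T}}.

Definition hitting (T : finType) (H : {set {set T}}) (A : {set T}) : bool :=
  [forall E in H, A :&: E != set0].

Definition Tr (T : finType) (H : {set {set T}}) : {set {set T}} :=
  [set A | minset (hitting H) A].

(* rank(H): maximum edge size (0 for the empty hypergraph) *)
Definition rank (T : finType) (H : {set {set T}}) : nat :=
  \max_(E in H) #|E|.

Definition restr (T : finType) (H : {set {set T}}) (r : nat) : {set {set T}} :=
  [set A in H | #|A| <= r].

From mathcomp Require Import all_boot.

Set Implicit Arguments.
Unset Strict Implicit.
Unset Printing Implicit Defensive.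

(* Duality of transversals: a set hitting every minimal transversal of G
   contains an edge of G, because otherwise its complement hits G and any
   minimal transversal inside that complement is missed. Hence
   Tr (Tr H) \subset H, and if G \subset Tr H with Tr G \subset H, every
   A in Tr H hits Tr G, so contains some C in G; both are minimal
   transversals of H, so A = C. Condition (3) makes the restriction in (2)
   vacuous. *)

Section Transversals.

Variable T : finType.
Implicit Types (G H K : {set {set T}}) (A E : {set T}).

Lemma hittingP H A :
  reflect (forall E, E \in H -> A :&: E != set0) (hitting H A).
Proof. exact: forall_inP. Qed.

Lemma hittingS H K A : K \subset H -> hitting H A -> hitting K A.
Proof.
by move=> sKH /hittingP hA; apply/hittingP=> E /(subsetP sKH); apply: hA.
Qed.

Lemma Tr_hitting H A : A \in Tr H -> hitting H A.
Proof. by rewrite inE => /minsetp. Qed.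

Lemma hitting_Tr_edge H E : E \in H -> hitting (Tr H) E.
Proof.
by move=> EH; apply/hittingP=> A /Tr_hitting /hittingP /(_ E EH); rewrite setIC.
Qed.

Lemma hitting_Tr_sup G A :
  hitting (Tr G) A -> exists2 E, E \in G & E \subset A.
Proof.
move=> hA; have [/exists_inP [E EG EA] | ] := boolP [exists E in G, E \subset A].
  by exists E.
rewrite negb_exists_in => /forall_inP notsubA.
have hCA : hitting G (~: A).
  by apply/hittingP=> E EG; rewrite setIC -setDE setD_eq0; apply: notsubA.
have [M minM sMCA] := minset_exists hCA.
have MTr : M \in Tr G by rewrite inE.
have /set0Pn [x] := hittingP _ _ hA M MTr.
by rewrite inE => /andP [xA /(subsetP sMCA)]; rewrite inE xA.
Qed.

Lemma Tr_eq_sub H A C : A \in Tr H -> C \in Tr H -> C \subset A -> A = C.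
Proof.
by rewrite !inE => minA /minsetp hC sCA; rewrite (minsetinf minA hC sCA).
Qed.

Lemma Tr_Tr_sub H : Tr (Tr H) \subset H.
Proof.
apply/subsetP=> B; rewrite inE => minB.
have [E EH sEB] := hitting_Tr_sup (minsetp minB).
by rewrite -(minsetinf minB (hitting_Tr_edge EH) sEB).
Qed.

Lemma Tr_sub_of_sub G H : G \subset Tr H -> Tr G \subset H -> Tr H \subset G.
Proof.
move=> sGTrH sTrGH; apply/subsetP=> A ATr.
have [C CG sCA] := hitting_Tr_sup (hittingS sTrGH (Tr_hitting ATr)).
by rewrite (Tr_eq_sub ATr (subsetP sGTrH C CG) sCA).
Qed.

Lemma leq_card_rank H E : E \in H -> #|E| <= rank H.
Proof. exact: (@leq_bigmax_cond _ (mem H) (fun E => #|E|)). Qed.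

Lemma leq_rank K H : K \subset H -> rank K <= rank H.
Proof.
by move=> sKH; apply/bigmax_leqP=> E /(subsetP sKH) /leq_card_rank.
Qed.

Lemma restr_sub H r : restr H r \subset H.
Proof. by apply/subsetP=> A; rewrite inE => /andP []. Qed.

Lemma restr_id H r : rank H <= r -> restr H r = H.
Proof.
move=> rkH; apply/setP=> A; rewrite inE andb_idr // => AH.
exact: leq_trans (leq_card_rank AH) rkH.
Qed.

End Transversals.

Theorem lemma10 (T : finType) (G H : {set {set T}}) :
  G = Tr H <->
  [/\ G \subset Tr H,
      restr (Tr G) (rank H) \subset H
    & rank (Tr G) <= rank H].
Proof.
split=> [-> | [sGTrH sRH rkTrG]].
  split; [exact: subxx | exact: subset_trans (restr_sub _ _) (Tr_Tr_sub H) |].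
  exact: leq_rank (Tr_Tr_sub H).
have sTrGH : Tr G \subset H by rewrite -(restr_id rkTrG).
by apply/eqP; rewrite eqEsubset sGTrH (Tr_sub_of_sub sGTrH sTrGH).
Qed.
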